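(* Let $A$ be a basic finite-dimensional associative algebra over an algebraically closed field, $e$ an idempotent of $A$, and $f$ a primitive idempotent which is a direct summand of $e$ (i.e. $e=f+e'$ with $e'$ an idempotent orthogonal to $f$). Assume there exist two non-isomorphic, non-simple finite-dimensional $A$-modules $M$ and $N$ such that (1) both $M$ and $N$ have simple top and simple socle, each isomorphic to the simple $A$-module $L^A(f)$ corresponding to $f$; and (2) $e\,(\mathrm{rad}(M)/\mathrm{soc}(M))=e\,(\mathrm{rad}(N)/\mathrm{soc}(N))=0$. Then $\dim\mathrm{Ext}^1_{eAe}(L^{eAe}(f),L^{eAe}(f))>1$, where $L^{eAe}(f)$ is the simple $eAe$-module corresponding to $f$. *)

From HB Require Import structures.
From mathcomp Require Import all_boot all_order all_algebra all_field.
Set Implicit Arguments. Unset Strict Implicit. Unset Printing Implicit Defensive.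
Import Order.TTheory GRing.Theory.
Local Open Scope ring_scope.

(* A finite-dimensional LEFT module over the corner algebra eAe (for an element
   e of A, in practice an is_idem) is given by a matrix representation on
   row vectors 'rV[K]_n: the element a of eAe acts by v |-> v *m cact a.
   Because composition of maps acting on the right is reversed, the left-module
   axiom (ab).v = a.(b.v) reads cact (a*b) = cact b *m cact a.
   The representation is defined on all of A but only depends on e*a*e.
   A-modules are the case e = 1. *)
Record cmod (K : fieldType) (A : falgType K) (e : A) := CMod {
  cdim : nat;
  cact : A -> 'M[K]_cdim;
  cact_corner : forall a, cact a = cact (e * a * e);
  cact_lin : forall (k : K) (a b : A),
      cact (k *: (e * a * e) + e * b * e) = k *: cact (e * a * e) + cact (e * b * e);
  cact_unit : cact e = 1%:M;
  cact_mul : forall a b : A,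
      cact ((e * a * e) * (e * b * e)) = cact (e * b * e) *m cact (e * a * e)
}.

Section Mods.
Variables (K : fieldType) (A : falgType K) (e : A).
Implicit Types (M N : cmod e).

(* submodules are represented by (the row space of) square matrices *)
Definition submod M (U : 'M[K]_(cdim M)) : Prop :=
  forall a : A, (U *m cact M a <= U)%MS.

Definition simple_mod M : Prop :=
  (0 < cdim M)%N /\
  forall U : 'M[K]_(cdim M), submod U -> U = 0 \/ row_full U.

Definition max_submod M (U : 'M[K]_(cdim M)) : Prop :=
  submod U /\ ~~ row_full U /\
  forall V : 'M[K]_(cdim M), submod V -> (U <= V)%MS -> (V <= U)%MS \/ row_full V.

Definition simple_submod M (U : 'M[K]_(cdim M)) : Prop :=
  submod U /\ U != 0 /\
  forall V : 'M[K]_(cdim M), submod V -> (V <= U)%MS -> V = 0 \/ (U <= V)%MS.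

Definition is_rad M (R : 'M[K]_(cdim M)) : Prop :=
  forall v : 'rV[K]_(cdim M), (v <= R)%MS <-> (forall U, max_submod U -> (v <= U)%MS).

Definition is_soc M (S : 'M[K]_(cdim M)) : Prop :=
  forall v : 'rV[K]_(cdim M), (v <= S)%MS <->
    exists (k : nat) (vs : 'I_k -> 'rV[K]_(cdim M)),
      v = \sum_(i < k) vs i /\
      forall i, exists U : 'M[K]_(cdim M), simple_submod U /\ (vs i <= U)%MS.

Definition mod_iso M N : Prop :=
  exists P : 'M[K]_(cdim M, cdim N),
    [/\ row_free P, row_full P & forall a : A, cact M a *m P = P *m cact N a].

(* Ext^1_{eAe}(V, W) computed as derivations modulo inner derivations
   (Hochschild description): an extension 0 -> W -> E -> V -> 0 of
   eAe-modules is E = W (+) V with a.(w,v) = (w *m cact W a + v *m D a, v *m cact V a),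
   D a : 'M_(dim V, dim W); associativity <-> derivation rule below,
   equivalence of extensions <-> differing by an inner derivation. *)
Definition is_der (V W : cmod e) (D : A -> 'M[K]_(cdim V, cdim W)) : Prop :=
  (forall (k : K) (a b : A),
      D (k *: (e * a * e) + e * b * e) = k *: D (e * a * e) + D (e * b * e)) /\
  (forall a b : A,
      D ((e * a * e) * (e * b * e)) =
        D (e * b * e) *m cact W (e * a * e) + cact V (e * b * e) *m D (e * a * e)).

Definition is_inner_der (V W : cmod e) (D : A -> 'M[K]_(cdim V, cdim W)) : Prop :=
  exists X : 'M[K]_(cdim V, cdim W),
    forall a : A, D (e * a * e) = cact V (e * a * e) *m X - X *m cact W (e * a * e).

Definition ext1_dim_gt1 (V W : cmod e) : Prop :=
  exists D1 D2 : A -> 'M[K]_(cdim V, cdim W),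
    [/\ is_der D1, is_der D2 &
      forall c1 c2 : K, is_inner_der (fun a => c1 *: D1 a + c2 *: D2 a) ->
        c1 = 0 /\ c2 = 0].

End Mods.

Definition is_idem (K : fieldType) (A : falgType K) (x : A) : Prop := x * x = x.

Definition primitive_idempotent (K : fieldType) (A : falgType K) (f : A) : Prop :=
  [/\ is_idem f, f != 0 &
    forall f1 f2 : A, is_idem f1 -> is_idem f2 -> f1 * f2 = 0 -> f2 * f1 = 0 ->
      f = f1 + f2 -> f1 = 0 \/ f2 = 0].

(* Basic algebra over an algebraically closed field: every simple A-module is
   one-dimensional (equivalently A / rad A is a product of copies of K). *)
Definition basic_alg (K : fieldType) (A : falgType K) : Prop :=
  forall S : cmod (1 : A), simple_mod S -> cdim S = 1%N.

(* M has simple top isomorphic to L^A(f), simple socle isomorphic to L^A(f), and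
   e (rad M / soc M) = 0.  A simple module T is isomorphic to L^A(f) iff f T <> 0. *)
Definition lemma8_cond (K : fieldType) (A : falgType K) (e f : A) (M : cmod (1 : A)) : Prop :=
  exists (R S : 'M[K]_(cdim M)),
    [/\ is_rad R, is_soc S,
        max_submod R /\ ~~ (cact M f <= R)%MS,
        simple_submod S /\ S *m cact M f != 0 &
        (R *m cact M e <= S)%MS].

From HB Require Import structures.
From mathcomp Require Import all_boot all_order all_algebra all_field.
From Stdlib Require Import Classical Lia.
From mathcomp Require Import zify ring.
Set Implicit Arguments. Unset Strict Implicit. Unset Printing Implicit Defensive.
Import Order.TTheory GRing.Theory.
Import VectorInternalTheory.
Local Open Scope ring_scope.

(* Since A is basic, every simple eAe-module is one-dimensional (it is the image of
   a simple A-submodule of the coinduced module Hom_eAe(A, L)); so L = L^eAe(f) is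
   a character chi of eAe with chi(f) = 1, the only one since f is primitive.
   For M as in the statement, pick m in fM outside rad M and s spanning soc M, which
   lies in rad M as M is not simple.  Because e (rad M / soc M) = 0, every c in eAe
   acts by c m = chi(c) m + d(c) s, and d is a chi-derivation of eAe, i.e. a class
   in Ext^1_eAe(L, L); it is nonzero since m generates M.  The annihilator of m,
   hence M itself, depends only on chi and the line K d.  Inner derivations of a
   one-dimensional module vanish, so if Ext^1 had dimension at most one, d_N would
   be a multiple of d_M and M, N would be isomorphic. *)

Lemma cact_linear (K : fieldType) (A : falgType K) (e : A) (L : cmod e) :
  linear (cact L).
Proof.
move=> k a b; rewrite (cact_corner L) [cact L a](cact_corner L) [cact L b](cact_corner L).
by rewrite -cact_lin mulrDr mulrDl -scalerAr -scalerAl.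
Qed.

HB.instance Definition _ (K : fieldType) (A : falgType K) (e : A) (L : cmod e) :=
  GRing.isLinear.Build K A 'M[K]_(cdim L) *:%R (cact L) (@cact_linear K A e L).

Lemma mulmx_sub_rows (K : fieldType) n (X Y : 'M[K]_n) :
  (forall u : 'rV_n, (u <= X)%MS -> (u *m Y <= X)%MS) -> (X *m Y <= X)%MS.
Proof. by move=> XY; apply/row_subP => i; rewrite row_mul; apply/XY/row_sub. Qed.

Lemma rank1_sub_rV (K : fieldType) m n (U : 'M[K]_(m, n)) (v : 'rV_n) :
  \rank U = 1%N -> v != 0 -> (v <= U)%MS -> (U <= v)%MS.
Proof. by move=> rankU v0 vU; rewrite -(mxrank_leqif_sup vU).2 rankU rank_rV v0. Qed.

(** * Linear maps on A as matrices *)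

Section LinearRows.
Variables (K : fieldType) (A : falgType K).
Local Notation N := (dim A).

Definition basis_vec (i : 'I_N) : A := r2v (delta_mx 0 i).

Lemma linear_expand p q (F : A -> 'M[K]_(p, q)) : linear F ->
  forall a, F a = \sum_i v2r a 0 i *: F (basis_vec i).
Proof.
move=> linF a; have F0 : F 0 = 0.
  by apply: (addrI (F 0)); have := linF 1 0 0; rewrite !scale1r addr0 => <-; rewrite addr0.
have {1}-> : a = \sum_i v2r a 0 i *: basis_vec i.
  apply: v2r_inj; rewrite linear_sum {1}[v2r a]row_sum_delta.
  by apply: eq_bigr => i _; rewrite linearZ /= r2vK.
by apply: (big_rec2 (fun x y => F x = y)) => // i x y _ <-; rewrite linF.
Qed.

Lemma linear_eq_on_basis p q (F G : A -> 'M[K]_(p, q)) : linear F -> linear G ->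
  (forall i, F (basis_vec i) = G (basis_vec i)) -> F =1 G.
Proof.
move=> linF linG FG a; rewrite (linear_expand linF) (linear_expand linG).
by apply: eq_bigr => i _; rewrite FG.
Qed.

Definition lin_rows p (g : A -> 'rV[K]_p) : 'M[K]_(N, p) := \matrix_i g (basis_vec i).

Lemma lin_rowsE p (g : A -> 'rV[K]_p) : linear g -> forall y, v2r y *m lin_rows g = g y.
Proof.
move=> ling y; rewrite (linear_expand ling y) mulmx_sum_row.
by apply: eq_bigr => i _; rewrite rowK.
Qed.

Lemma v2r_mulmxI p (X Y : 'M[K]_(N, p)) : (forall y, v2r y *m X = v2r y *m Y) -> X = Y.
Proof.
move=> XY; apply/row_matrixP => i; rewrite !rowE.
by have := XY (basis_vec i); rewrite /basis_vec r2vK.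
Qed.

Lemma mxvec_mulmxI m p q (X Y : 'M[K]_(m * p, q)) :
  (forall Phi : 'M[K]_(m, p), mxvec Phi *m X = mxvec Phi *m Y) -> X = Y.
Proof.
move=> XY; apply/row_matrixP => i; rewrite !rowE.
by have := XY (vec_mx (delta_mx 0 i)); rewrite vec_mxK.
Qed.

Definition lmul_mx (c : A) := lin_rows (fun y => v2r (c * y)).
Definition rmul_mx (c : A) := lin_rows (fun y => v2r (y * c)).

Lemma lmul_mxE c y : v2r y *m lmul_mx c = v2r (c * y).
Proof. by apply: lin_rowsE => k a b; rewrite mulrDr -scalerAr !linearP. Qed.

Lemma rmul_mxE c y : v2r y *m rmul_mx c = v2r (y * c).
Proof. by apply: lin_rowsE => k a b; rewrite mulrDl -scalerAl !linearP. Qed.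

Lemma rmul_mxM a b : rmul_mx (a * b) = rmul_mx a *m rmul_mx b.
Proof. by apply: v2r_mulmxI => y; rewrite mulmxA !rmul_mxE mulrA. Qed.

Lemma rmul_mx1 : rmul_mx 1 = 1%:M.
Proof. by apply: v2r_mulmxI => y; rewrite rmul_mxE mulr1 mulmx1. Qed.

Lemma lmul_rmul_mxC a b : lmul_mx a *m rmul_mx b = rmul_mx b *m lmul_mx a.
Proof. by apply: v2r_mulmxI => y; rewrite !mulmxA lmul_mxE !rmul_mxE lmul_mxE mulrA. Qed.

Lemma lmul_mx_linear : linear lmul_mx.
Proof.
move=> k a b; apply: v2r_mulmxI => y.
by rewrite mulmxDr -scalemxAr !lmul_mxE mulrDl -scalerAl linearP.
Qed.

Lemma rmul_mx_linear : linear rmul_mx.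
Proof.
move=> k a b; apply: v2r_mulmxI => y.
by rewrite mulmxDr -scalemxAr !rmul_mxE mulrDr -scalerAr linearP.
Qed.

End LinearRows.

(** * Submodules and subquotients of A-modules *)

Section AModule.
Variables (K : fieldType) (A : falgType K) (M : cmod (1 : A)).
Local Notation n := (cdim M).
Local Notation ca := (cact M).

Lemma cact1 : ca 1 = 1%:M.
Proof. exact: cact_unit. Qed.

Lemma cactM a b : ca (a * b) = ca b *m ca a.
Proof. by have := cact_mul M a b; rewrite !mul1r !mulr1. Qed.

Lemma submod_mulmx (U : 'M_n) (u : 'rV_n) a :
  submod U -> (u <= U)%MS -> (u *m ca a <= U)%MS.
Proof. by move=> /(_ a) subU uU; apply: submx_trans subU; apply: submxMr. Qed.

Lemma rank1_submod_eigen (U : 'M_n) (v : 'rV_n) : submod U -> \rank U = 1%N ->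
  (v <= U)%MS -> forall a, exists c : K, v *m ca a = c *: v.
Proof.
move=> subU rankU vU a.
have [->|v0] := eqVneq v 0; first by exists 0; rewrite mul0mx scaler0.
have /sub_rVP[c ->] : (v *m ca a <= v)%MS.
  by apply: submx_trans (rank1_sub_rV rankU v0 vU); apply: submod_mulmx.
by exists c.
Qed.

Lemma simple_submod_exists (U : 'M[K]_n) : submod U -> U != 0 ->
  exists2 V, simple_submod V & (V <= U)%MS.
Proof.
move: {2}(\rank U) (leqnn (\rank U)) => r; elim: r U => [|r IH] U rankU subU U0.
  by move: rankU; rewrite leqn0 mxrank_eq0 (negbTE U0).
have [simU|nsimU] := classic (simple_submod U); first by exists U.
have [V [subV VU V0 UV]] : exists V, [/\ submod V, (V <= U)%MS, V != 0 & ~~ (U <= V)%MS].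
  apply: NNPP => noV; apply: nsimU; split=> //; split=> // V subV VU.
  have [->|V0] := eqVneq V 0; [by left | right].
  by apply: NNPP => UV; apply: noV; exists V; split=> //; apply/negP.
have ltVU : (\rank V < \rank U)%N by apply: rank_ltmx; rewrite ltmxE VU.
have [W simW WV] := IH V (leq_trans ltVU rankU) subV V0.
by exists W; last exact: submx_trans WV VU.
Qed.

Lemma max_submod_exists (W : 'M[K]_n) : submod W -> ~~ row_full W ->
  exists2 U, max_submod U & (W <= U)%MS.
Proof.
move: {2}(n - \rank W)%N (leqnn (n - \rank W)) => r.
elim: r W => [|r IH] W corankW subW Wnf.
  by move: corankW Wnf; rewrite leqn0 subn_eq0 /row_full eqn_leq rank_leq_col => ->.
have [maxW|nmaxW] := classic (max_submod W); first by exists W.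
have [V [subV WV VW Vnf]] :
    exists V, [/\ submod V, (W <= V)%MS, ~~ (V <= W)%MS & ~~ row_full V].
  apply: NNPP => noV; apply: nmaxW; split=> //; split=> // V subV WV.
  have [VW|VW] := boolP (V <= W)%MS; [by left | right].
  by apply: NNPP => Vnf; apply: noV; exists V; split=> //; apply/negP.
have ltWV : (\rank W < \rank V)%N by apply: rank_ltmx; rewrite ltmxE WV.
have [|U maxU VU] := IH V _ subV Vnf; first by have := rank_leq_col V; lia.
by exists U; last exact: submx_trans WV VU.
Qed.

Definition orbit_mx (v : 'rV[K]_n) := lin_rows (fun x => v *m ca x).

Lemma orbit_mxE (v : 'rV[K]_n) y : v2r y *m orbit_mx v = v *m ca y.
Proof. by apply: lin_rowsE => k a b; rewrite linearP mulmxDr -scalemxAr. Qed.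

Lemma orbit_mx_full (v : 'rV[K]_n) :
  (forall u, exists x, u = v *m ca x) -> row_full (orbit_mx v).
Proof.
move=> genv; rewrite -sub1mx; apply/row_subP => i.
by have [x ->] := genv (row i 1%:M); rewrite -orbit_mxE submxMl.
Qed.

Definition cyclic_submx (v : 'rV[K]_n) : 'M[K]_n := <<orbit_mx v>>%MS.

Lemma cyclic_submxP (v u : 'rV[K]_n) :
  (u <= cyclic_submx v)%MS <-> exists x, u = v *m ca x.
Proof.
rewrite genmxE; split; last by case=> x ->; rewrite -orbit_mxE submxMl.
by case/submxP => w ->; exists (r2v w); rewrite -orbit_mxE r2vK.
Qed.

Lemma cyclic_submx_self (v : 'rV[K]_n) : (v <= cyclic_submx v)%MS.
Proof. by apply/cyclic_submxP; exists 1; rewrite cact1 mulmx1. Qed.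

Lemma cyclic_submx_neq0 (v : 'rV[K]_n) : v != 0 -> cyclic_submx v != 0.
Proof.
by move=> v0; apply: contraNneq v0 => c0; have := cyclic_submx_self v; rewrite c0 submx0.
Qed.

Lemma cyclic_submx_submod (v : 'rV[K]_n) : submod (cyclic_submx v).
Proof.
move=> a; apply: mulmx_sub_rows => _ /cyclic_submxP[x ->].
by apply/cyclic_submxP; exists (a * x); rewrite cactM mulmxA.
Qed.

Lemma dim1_simple : n = 1%N -> simple_mod M.
Proof.
move=> n1; split=> [|U _]; first by rewrite n1.
have [U0|U0] := eqVneq U 0; [by left | right].
by rewrite /row_full eqn_leq rank_leq_col (leq_trans (eq_leq n1)) // lt0n mxrank_eq0.
Qed.

Section LineCharacter.
Variables (R : 'M[K]_n) (v : 'rV[K]_n).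
Hypotheses (subR : submod R) (vR : ~~ (v <= R)%MS).
Hypothesis line : forall a, exists c : K, (v *m ca a - c *: v <= R)%MS.

(* The character of A on the one-dimensional subquotient (K v + R) / R. *)
Definition line_char a : K := xchoose (line a).

Lemma line_charE a : (v *m ca a - line_char a *: v <= R)%MS.
Proof. exact: (xchooseP (line a)). Qed.

Lemma line_char_unique a c : (v *m ca a - c *: v <= R)%MS -> line_char a = c.
Proof.
move=> vc; apply/eqP; rewrite -subr_eq0; apply: contraNT vR => c0.
rewrite -(scale1r v) -(mulVf c0) -scalerA scalemx_sub //.
have -> : (line_char a - c) *: v = (v *m ca a - c *: v) - (v *m ca a - line_char a *: v).
  by rewrite scalerBl opprB [RHS]addrC addrA subrK.
by rewrite addmx_sub ?eqmx_opp ?line_charE.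
Qed.

Lemma line_charD k a b : line_char (k *: a + b) = k * line_char a + line_char b.
Proof.
apply: line_char_unique.
have -> : v *m ca (k *: a + b) - (k * line_char a + line_char b) *: v =
    k *: (v *m ca a - line_char a *: v) + (v *m ca b - line_char b *: v).
  by rewrite linearP mulmxDr -scalemxAr scalerDl -scalerA scalerBr addrACA opprD.
by rewrite addmx_sub ?scalemx_sub ?line_charE.
Qed.

Lemma line_charM a b : line_char (a * b) = line_char a * line_char b.
Proof.
apply: line_char_unique.
have -> : v *m ca (a * b) - (line_char a * line_char b) *: v =
    (v *m ca b - line_char b *: v) *m ca a + line_char b *: (v *m ca a - line_char a *: v).
  rewrite cactM mulmxA mulmxBl -scalemxAl scalerBr scalerA [line_char b * _]mulrC.
  by rewrite addrA subrK.
by rewrite addmx_sub ?scalemx_sub ?line_charE // submod_mulmx ?line_charE.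
Qed.

End LineCharacter.

Section Compression.
Variables (k : nat) (B : 'M[K]_(k, n)) (P : 'M[K]_(n, k)).
Hypothesis BP : B *m P = 1%:M.
Hypothesis compressM : forall a b,
  B *m ca b *m ca a *m P = B *m ca b *m P *m (B *m ca a *m P).

Definition compress_act (a : A) := B *m ca a *m P.

Fact compress_corner a : compress_act a = compress_act (1 * a * 1).
Proof. by rewrite mul1r mulr1. Qed.

Fact compress_lin (c : K) (a b : A) :
  compress_act (c *: (1 * a * 1) + 1 * b * 1) =
  c *: compress_act (1 * a * 1) + compress_act (1 * b * 1).
Proof.
by rewrite /compress_act !mul1r !mulr1 linearP mulmxDr mulmxDl -scalemxAr -scalemxAl.
Qed.

Fact compress_unit : compress_act 1 = 1%:M.
Proof. by rewrite /compress_act cact1 mulmx1. Qed.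

Fact compress_mul (a b : A) :
  compress_act ((1 * a * 1) * (1 * b * 1)) =
  compress_act (1 * b * 1) *m compress_act (1 * a * 1).
Proof. by rewrite /compress_act !mul1r !mulr1 cactM mulmxA compressM. Qed.

(* The action a |-> B (ca a) P; B a basis of a submodule and P a left inverse of B
   give the submodule, B a basis of a complement of R and P the projection along R
   give the quotient by R. *)
Definition compress_cmod : cmod (1 : A) :=
  CMod compress_corner compress_lin compress_unit compress_mul.

End Compression.

Section SimpleSubmodule.
Variable U : 'M[K]_n.
Hypothesis simU : simple_submod U.

Let B := row_base U.
Let P := pinvmx B.

Let BP : B *m P = 1%:M.
Proof. exact: mulmxVp (row_base_free U). Qed.

Let BcaB a : (B *m ca a <= B)%MS.
Proof. by rewrite /B (eqmxMr _ (eq_row_base U)) eq_row_base; apply: (proj1 simU). Qed.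

Let compressM a b : B *m ca b *m ca a *m P = B *m ca b *m P *m (B *m ca a *m P).
Proof. by rewrite [RHS]mulmxA [in RHS]mulmxA (mulmxKpV (BcaB b)). Qed.

Lemma simple_submod_compress_simple : simple_mod (compress_cmod BP compressM).
Proof.
case: simU => subU [U0 minU]; split; first by rewrite /= lt0n mxrank_eq0.
move=> V /= subV.
have subVB : submod <<V *m B>>%MS.
  move=> a; rewrite (eqmxMr _ (genmxE _)) genmxE.
  have -> : V *m B *m ca a = V *m compress_act B P a *m B.
    by rewrite /compress_act -[RHS]mulmxA (mulmxKpV (BcaB a)) -mulmxA.
  exact: submxMr (subV a).
have VBU : (<<V *m B>> <= U)%MS by rewrite genmxE -(eq_row_base U) submxMl.
case: (minU _ subVB VBU) => [|UVB].
  move/eqP; rewrite -submx0 genmxE submx0 => /eqP VB0; left.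
  by rewrite -[V]mulmx1 -BP mulmxA VB0 mul0mx.
right; rewrite /row_full; apply/eqP/anti_leq; rewrite rank_leq_col /=.
by have := mxrankS UVB; rewrite genmxE mxrankMfree // row_base_free.
Qed.

Lemma rank_simple_submod : basic_alg A -> \rank U = 1%N.
Proof. by move/(_ _ simple_submod_compress_simple). Qed.

End SimpleSubmodule.

Section MaximalSubmodule.
Variable R : 'M[K]_n.
Hypothesis maxR : max_submod R.

Let C := (R^C)%MS.
Let B := row_base C.
Let P := proj_mx C R *m pinvmx B.

Let CR0 : (C :&: R = 0)%MS.
Proof. by rewrite capmxC capmx_compl. Qed.

Let BP : B *m P = 1%:M.
Proof.
rewrite /P mulmxA proj_mx_id ?CR0 ?eq_row_base //.
exact: mulmxVp (row_base_free C).
Qed.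

Let RP0 m (x : 'M_(m, n)) : (x <= R)%MS -> x *m P = 0.
Proof. by move=> xR; rewrite /P mulmxA proj_mx_0 ?CR0 // mul0mx. Qed.

Let PB_compl m (x : 'M_(m, n)) : (x - x *m P *m B <= R)%MS.
Proof.
have xB : (x *m proj_mx C R <= B)%MS by rewrite eq_row_base proj_mx_sub.
rewrite /P mulmxA (mulmxKpV xB); apply: proj_mx_compl_sub.
by apply: submx_full; rewrite addsmxC addsmx_compl_full.
Qed.

Let compressM a b : B *m ca b *m ca a *m P = B *m ca b *m P *m (B *m ca a *m P).
Proof.
apply/eqP; rewrite [in X in _ == X]mulmxA [in X in _ == X]mulmxA -subr_eq0.
rewrite -mulmxBl -mulmxBl; apply/eqP/RP0/submx_trans/(proj1 maxR a).
exact/submxMr/PB_compl.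
Qed.

Lemma max_submod_quotient_simple : simple_mod (compress_cmod BP compressM).
Proof.
case: maxR => subR [Rnf maxR']; split.
  by rewrite /= mxrank_compl subn_gt0 ltn_neqAle rank_leq_col andbT.
move=> V /= subV.
have subVBR : submod (V *m B + R)%MS.
  move=> a; rewrite addsmxMr addsmx_sub (submx_trans (subR a) (addsmxSr _ _)) andbT.
  have -> : V *m B *m ca a =
      V *m compress_act B P a *m B + V *m (B *m ca a - B *m ca a *m P *m B).
    by rewrite /compress_act mulmxBr addrC -!mulmxA subrK.
  apply: addmx_sub_adds; first exact: submxMr (subV a).
  exact: submx_trans (submxMl _ _) (PB_compl _).
case: (maxR' _ subVBR (addsmxSr _ _)) => [VBR|VBRfull].
  left; have VB_R : (V *m B <= R)%MS := submx_trans (addsmxSl _ _) VBR.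
  by rewrite -[V]mulmx1 -BP mulmxA RP0.
right; rewrite -sub1mx.
have /sub_addsmxP[u defB] : (B <= V *m B + R)%MS by apply: submx_full.
have := congr1 (mulmx^~ P) defB; rewrite /= BP mulmxDl (RP0 (submxMl _ _)) addr0.
have VBP : V *m B *m P = V by rewrite -mulmxA BP mulmx1.
by rewrite -mulmxA VBP => ->; rewrite submxMl.
Qed.

Lemma rank_compl_max_submod : basic_alg A -> \rank (R^C)%MS = 1%N.
Proof. by move/(_ _ max_submod_quotient_simple). Qed.

Lemma max_submod_line (m : 'rV_n) : basic_alg A -> ~~ (m <= R)%MS ->
  forall x, exists c : K, (x - c *: m <= R)%MS.
Proof.
move=> basic mR x.
have corankR := rank_compl_max_submod basic; rewrite mxrank_compl in corankR.
have Rm_full : row_full (R + m)%MS.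
  have ltR : (\rank R < \rank (R + m)%MS)%N.
    by apply: rank_ltmx; rewrite ltmxE addsmxSl addsmx_sub submx_refl (negbTE mR).
  by have := rank_leq_col (R + m)%MS; rewrite /row_full; lia.
have /sub_addsmxP[u ->] : (x <= R + m)%MS by apply: submx_full.
exists (u.2 0 0); rewrite {1}[u.2]mx11_scalar mul_scalar_mx addrK; exact: submxMl.
Qed.

End MaximalSubmodule.
End AModule.

(** * Characters of the corner algebra eAe *)

Lemma poly_separating_idem (K : fieldType) (p : {poly K}) (c1 c2 : K) :
  p != 0 -> root p c1 -> root p c2 -> c1 != c2 ->
  exists q : {poly K}, [/\ p %| q * q - q, q.[c1] = 0 & q.[c2] = 1].
Proof.
move=> p0 pc1 pc2 c12.
have [[|k] [r /implyP/(_ p0) rc1 defp]] := multiplicity_XsubC p c1.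
  by move: pc1; rewrite defp expr0 mulr1 (negbTE rc1).
have rc2 : root r c2.
  by move: pc2; rewrite defp rootM root_exp_XsubC eq_sym (negbTE c12) orbF.
have /Bezout_eq1_coprimepP[[u v] /= bez] : coprimep r (('X - c1%:P) ^+ k.+1).
  by rewrite coprimep_expr // coprimep_XsubC.
have q1 : v * ('X - c1%:P) ^+ k.+1 - 1 = - (u * r) by rewrite -bez opprD addrCA subrr addr0.
exists (v * ('X - c1%:P) ^+ k.+1); split.
- have -> : v * ('X - c1%:P) ^+ k.+1 * (v * ('X - c1%:P) ^+ k.+1) - v * ('X - c1%:P) ^+ k.+1
      = - (u * v) * p.
    by rewrite -{3}[v * _]mulr1 -mulrBr q1 defp; ring.
  exact/dvdp_mull/dvdpp.
- by rewrite hornerM horner_exp hornerXsubC subrr expr0n mulr0.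
- have -> : v * ('X - c1%:P) ^+ k.+1 = 1 - u * r by rewrite -q1 addrCA subrr addr0.
  by rewrite hornerD hornerN hornerM (eqP rc2) mulr0 oppr0 hornerC addr0.
Qed.

Section CornerArithmetic.
Variables (K : fieldType) (A : falgType K) (e : A).
Hypothesis ee : e * e = e.

Lemma cornerK a : e * (e * a * e) * e = e * a * e.
Proof. by rewrite !mulrA ee -(mulrA _ e e) ee. Qed.

Lemma corner_comb k a b :
  e * (k *: (e * a * e) + e * b * e) * e = k *: (e * a * e) + e * b * e.
Proof. by rewrite mulrDr mulrDl -scalerAr -scalerAl !cornerK. Qed.

Lemma corner_prod a b : e * ((e * a * e) * (e * b * e)) * e = (e * a * e) * (e * b * e).
Proof. by rewrite !mulrA ee -[e * a * e * e]mulrA ee -!mulrA ee. Qed.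

Lemma corner_eyxf f y x : f * e = f -> e * (e * y * x * f) * e = e * y * x * f.
Proof. by move=> fe; rewrite !mulrA ee -(mulrA _ f e) fe. Qed.

End CornerArithmetic.

Section CornerCharacters.
Variables (K : fieldType) (A : falgType K) (e f : A).
Hypothesis ee : e * e = e.
Hypothesis fprim : primitive_idempotent f.
Hypothesis ef : e * f = f.
Hypothesis fe : f * e = f.

(* chi encodes a one-dimensional eAe-module on which f acts as 1, i.e. L^eAe(f). *)
Definition corner_char (chi : A -> K) :=
  [/\ forall k a b,
        chi (k *: (e * a * e) + e * b * e) = k * chi (e * a * e) + chi (e * b * e),
      forall a b, chi ((e * a * e) * (e * b * e)) = chi (e * a * e) * chi (e * b * e) &
      chi f = 1].

Lemma prim_idem : f * f = f. Proof. by case: fprim. Qed.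

Lemma corner_f : e * f * e = f. Proof. by rewrite ef fe. Qed.

Lemma corner_of_f (x : A) : f * x = x -> x * f = x -> e * x * e = x.
Proof. by move=> fx xf; rewrite -fx -xf !mulrA ef -!mulrA fe. Qed.

Section Character.
Variable chi : A -> K.
Hypothesis chi_char : corner_char chi.

Lemma charD k {x y} :
  e * x * e = x -> e * y * e = y -> chi (k *: x + y) = k * chi x + chi y.
Proof. by case: chi_char => chiD _ _ ex ey; have := chiD k x y; rewrite ex ey. Qed.

Lemma charM {x y} : e * x * e = x -> e * y * e = y -> chi (x * y) = chi x * chi y.
Proof. by case: chi_char => _ chiM _ ex ey; have := chiM x y; rewrite ex ey. Qed.

Lemma char0 : chi 0 = 0.
Proof.
have e0 : e * 0 * e = 0 by rewrite mulr0 mul0r.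
have := charD 1 e0 e0; rewrite scale1r addr0 mul1r => chi00.
by apply: (addIr (chi 0)); rewrite add0r -chi00.
Qed.

Lemma char_fcorner a : chi (e * a * e) = chi (f * a * f).
Proof.
have -> : f * a * f = f * (e * a * e) * f by rewrite !mulrA fe -!mulrA ef.
have fa : e * (f * (e * a * e)) * e = f * (e * a * e).
  by rewrite !mulrA ef fe -(mulrA _ e e) ee.
rewrite (charM fa corner_f) (charM corner_f (cornerK ee a)).
by case: chi_char => _ _ ->; rewrite mul1r mulr1.
Qed.

End Character.

Section FPoly.
Variable x : A.
Hypotheses (fx : f * x = x) (xf : x * f = x).

(* q(x) computed in the algebra fAf, whose unit is f. *)
Definition fpoly (q : {poly K}) := horner_alg x q * f.

Lemma horner_alg_fC q : f * horner_alg x q = horner_alg x q * f.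
Proof.
elim/poly_ind: q => [|q c IH]; first by rewrite rmorph0 mulr0 mul0r.
rewrite rmorphD rmorphM /= horner_algX horner_algC mulrDr mulrDl mulrA IH.
by rewrite -!mulrA fx xf -scalerAl -scalerAr mul1r mulr1.
Qed.

Lemma fpoly_fl q : f * fpoly q = fpoly q.
Proof. by rewrite /fpoly mulrA horner_alg_fC -mulrA prim_idem. Qed.

Lemma fpoly_fr q : fpoly q * f = fpoly q.
Proof. by rewrite /fpoly -mulrA prim_idem. Qed.

Lemma fpolyM p q : fpoly (p * q) = fpoly p * fpoly q.
Proof.
rewrite /fpoly rmorphM /= mulrA -(mulrA _ f) horner_alg_fC mulrA.
by rewrite -(mulrA _ f f) prim_idem.
Qed.

Lemma fpoly1 : fpoly 1 = f.
Proof. by rewrite /fpoly rmorph1 mul1r. Qed.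

Lemma fpolyB p q : fpoly (p - q) = fpoly p - fpoly q.
Proof. by rewrite /fpoly rmorphB mulrBl. Qed.

Lemma fpoly_char chi : corner_char chi -> forall q, chi (fpoly q) = q.[chi x].
Proof.
move=> chi_char; have ex := corner_of_f fx xf.
have efp q : e * fpoly q * e = fpoly q := corner_of_f (fpoly_fl q) (fpoly_fr q).
elim/poly_ind => [|q c IH]; first by rewrite /fpoly rmorph0 mul0r horner0 char0.
have -> : fpoly (q * 'X + c%:P) = c *: f + fpoly q * x.
  rewrite /fpoly rmorphD rmorphM /= horner_algX horner_algC mulrDl addrC.
  by rewrite -scalerAl mul1r -!mulrA fx xf.
have efx : e * (fpoly q * x) * e = fpoly q * x.
  by apply: corner_of_f; [rewrite mulrA fpoly_fl | rewrite -mulrA xf].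
rewrite (charD chi_char c corner_f efx) (charM chi_char (efp q) ex) IH hornerMXaddC.
by case: chi_char => _ _ ->; rewrite mulr1 addrC.
Qed.

Lemma fpoly_annihilated : exists2 p : {poly K}, p != 0 & fpoly p = 0.
Proof.
pose W : 'M[K]_((dim A).+1, dim A) := \matrix_(i < (dim A).+1) v2r (x ^+ i * f).
have W_nfree : ~~ row_free W.
  by apply/negP => /eqP rankW; have := rank_leq_col W; rewrite rankW ltnn.
pose c := nz_row (kermx W).
have c0 : c != 0 by rewrite nz_row_eq0 kermx_eq0.
have cW : c *m W = 0 by apply/sub_kermxP; apply: nz_row_sub.
exists (\poly_(i < (dim A).+1) c 0 (inord i)).
  apply: contraNneq c0 => /(congr1 (fun q : {poly K} => q`_ _)) c_0.
  by apply/eqP/rowP => i; have := c_0 i; rewrite coef_poly ltn_ord coef0 inord_val mxE.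
rewrite /fpoly poly_def rmorph_sum /= mulr_suml; apply: v2r_inj.
rewrite linear0 linear_sum; apply: etrans cW; rewrite mulmx_sum_row.
apply: eq_bigr => i _.
rewrite inord_val -mul_polyC rmorphM /= horner_algC rmorphXn /= horner_algX.
by rewrite -mulrA mulr_algl linearZ /= rowK.
Qed.

End FPoly.

Lemma corner_char_unique chi1 chi2 : corner_char chi1 -> corner_char chi2 ->
  forall a, chi1 (e * a * e) = chi2 (e * a * e).
Proof.
move=> char1 char2 a; rewrite (char_fcorner char1) (char_fcorner char2).
set x := f * a * f.
have fx : f * x = x by rewrite /x !mulrA prim_idem.
have xf : x * f = x by rewrite /x -mulrA prim_idem.
apply: NNPP => /eqP neq12.
have [p p0 px0] := fpoly_annihilated x.
have root_p chi : corner_char chi -> root p (chi x).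
  by move=> char; rewrite /root -(fpoly_char fx xf char) px0 char0.
(* A polynomial in x vanishing at chi1 x but not at chi2 x splits f into two
   orthogonal idempotents. *)
have [q [pq q1 q2]] := poly_separating_idem p0 (root_p _ char1) (root_p _ char2) neq12.
set g := fpoly x q.
have gg : g * g = g.
  apply/eqP; rewrite -subr_eq0 -(fpolyM fx xf) -(fpolyB x).
  by case/dvdpP: pq => t ->; rewrite (fpolyM fx xf) px0 mulr0.
have fg : f * g = g := fpoly_fl fx xf q.
have gf : g * f = g := fpoly_fr x q.
have g_fg : g * (f - g) = 0 by rewrite mulrBr gf gg subrr.
have fg_g : (f - g) * g = 0 by rewrite mulrBl fg gg subrr.
have fg_idem : (f - g) * (f - g) = f - g by rewrite mulrBl g_fg subr0 mulrBr prim_idem fg.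
case: fprim => _ _ /(_ g (f - g) gg fg_idem g_fg fg_g); rewrite addrC subrK.
case=> // [g0|fg0].
  have := fpoly_char fx xf char2 q; rewrite -/g g0 (char0 char2) q2.
  by move/eqP; rewrite eq_sym oner_eq0.
have := fpoly_char fx xf char1 (1 - q).
rewrite (fpolyB x) (fpoly1 x) -/g fg0 (char0 char1) hornerD hornerN hornerC q1 subr0.
by move/eqP; rewrite eq_sym oner_eq0.
Qed.

End CornerCharacters.

(** * Simple eAe-modules are one-dimensional *)

Section Coinduction.
Variables (K : fieldType) (A : falgType K) (e : A) (L : cmod e).
Hypothesis ee : e * e = e.
Local Notation N := (dim A).
Local Notation d := (cdim L).

(* Hom_K(A, L) as an A-module via (b . Phi)(y) = Phi(y b), Phi stored as the
   N x d matrix of y |-> Phi(y) and flattened by mxvec. *)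
Definition coind_act (b : A) : 'M[K]_(N * d) := lin_mulmx (rmul_mx b).

Lemma coind_actE (Phi : 'M[K]_(N, d)) b :
  mxvec Phi *m coind_act b = mxvec (rmul_mx b *m Phi).
Proof. exact: mul_vec_lin. Qed.

Lemma vec_mx_coind_act (u : 'rV[K]_(N * d)) b :
  vec_mx (u *m coind_act b) = rmul_mx b *m vec_mx u.
Proof. by rewrite -{1}[u]vec_mxK coind_actE mxvecK. Qed.

Fact coind_corner a : coind_act a = coind_act (1 * a * 1).
Proof. by rewrite mul1r mulr1. Qed.

Fact coind_lin (k : K) (a b : A) :
  coind_act (k *: (1 * a * 1) + 1 * b * 1) =
  k *: coind_act (1 * a * 1) + coind_act (1 * b * 1).
Proof.
rewrite !mul1r !mulr1; apply: mxvec_mulmxI => Phi.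
by rewrite mulmxDr -scalemxAr !coind_actE rmul_mx_linear mulmxDl -scalemxAl linearP.
Qed.

Fact coind_unit : coind_act 1 = 1%:M.
Proof. by apply: mxvec_mulmxI => Phi; rewrite coind_actE rmul_mx1 mul1mx mulmx1. Qed.

Fact coind_mul (a b : A) :
  coind_act ((1 * a * 1) * (1 * b * 1)) = coind_act (1 * b * 1) *m coind_act (1 * a * 1).
Proof.
rewrite !mul1r !mulr1; apply: mxvec_mulmxI => Phi.
by rewrite mulmxA !coind_actE rmul_mxM mulmxA.
Qed.

Definition coind_cmod : cmod (1 : A) := CMod coind_corner coind_lin coind_unit coind_mul.

Definition corner_hom (Phi : 'M[K]_(N, d)) :=
  forall a, lmul_mx (e * a * e) *m Phi = Phi *m cact L a.

Lemma corner_hom_on_basis Phi :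
  (forall i, lmul_mx (e * basis_vec i * e) *m Phi = Phi *m cact L (basis_vec i)) ->
  corner_hom Phi.
Proof.
move=> homPhi; apply: linear_eq_on_basis homPhi => k y z.
  by rewrite mulrDr mulrDl -scalerAr -scalerAl lmul_mx_linear mulmxDl -scalemxAl.
by rewrite linearP mulmxDr -scalemxAr.
Qed.

Definition corner_hom_mx : 'M[K]_(N * d) :=
  (\bigcap_(i < N) kermx (lin_mulmx (lmul_mx (e * basis_vec i * e)%R)
                           - lin_mulmxr (cact L (basis_vec i)))%R)%MS.

Lemma corner_hom_mxP Phi : (mxvec Phi <= corner_hom_mx)%MS <-> corner_hom Phi.
Proof.
rewrite /corner_hom_mx; split.
  move/sub_bigcapmxP => homPhi; apply: corner_hom_on_basis => i.
  move: (homPhi i isT); rewrite sub_kermx mulmxBr /lin_mulmx /lin_mulmxr !mul_vec_lin.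
  by rewrite subr_eq0 => /eqP/(can_inj mxvecK).
move=> homPhi; apply/sub_bigcapmxP => i _.
by rewrite sub_kermx mulmxBr /lin_mulmx /lin_mulmxr !mul_vec_lin /= homPhi subrr.
Qed.

Lemma corner_hom_mx_submod : submod (M := coind_cmod) corner_hom_mx.
Proof.
move=> b; apply: mulmx_sub_rows => u /=; rewrite -{1 2}[u]vec_mxK.
move=> /corner_hom_mxP homu; rewrite coind_actE; apply/corner_hom_mxP => a.
by rewrite mulmxA lmul_rmul_mxC -!mulmxA homu.
Qed.

Lemma corner_hom_mx_neq0 : (0 < d)%N -> corner_hom_mx != 0.
Proof.
move=> d0; pose l : 'rV[K]_d := nz_row 1%:M.
have l0 : l != 0 by rewrite nz_row_eq0 -mxrank_eq0 mxrank1 -lt0n.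
have ling : linear (fun y => l *m cact L y).
  by move=> k y z; rewrite linearP mulmxDr -scalemxAr.
pose Phi := lin_rows (fun y => l *m cact L y).
have /corner_hom_mxP : corner_hom Phi.
  move=> a; apply: v2r_mulmxI => y.
  rewrite !mulmxA lmul_mxE !(lin_rowsE ling) -mulmxA; congr (l *m _).
  rewrite (cact_corner L (e * a * e * y)).
  have -> : e * (e * a * e * y) * e = (e * a * e) * (e * y * e).
    by rewrite !mulrA ee -(mulrA (e * a) e e) ee.
  by rewrite (cact_mul L) -!(cact_corner L).
apply: contraTneq => ->; rewrite submx0 mxvec_eq0; apply/eqP => Phi0.
have := lin_rowsE ling e; rewrite -/Phi Phi0 mulmx0 (cact_unit L) mulmx1.
by move=> l_0; move: l0; rewrite -l_0 eqxx.
Qed.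

Lemma corner_hom_image_submod Phi : corner_hom Phi -> submod (M := L) <<Phi>>%MS.
Proof. by move=> homPhi a; rewrite (eqmxMr _ (genmxE _)) genmxE -homPhi submxMl. Qed.

Lemma rmul_eigen_rank_le1 (Phi : 'M[K]_(N, d)) :
  (forall b, exists c : K, rmul_mx b *m Phi = c *: Phi) -> (\rank Phi <= 1)%N.
Proof.
move=> eig; apply: leq_trans (rank_leq_row (v2r (1 : A) *m Phi)).
apply/mxrankS/row_subP => i; rewrite rowE.
have -> : delta_mx 0 i = v2r (1 * basis_vec i) by rewrite mul1r r2vK.
rewrite -rmul_mxE -mulmxA; have [c ->] := eig (basis_vec i).
by rewrite -scalemxAr scalemx_sub.
Qed.

(* A simple A-submodule of Hom_eAe(A, L) is a line K Phi with Phi(y b) = c(b) Phi(y),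
   so the image of Phi, a nonzero eAe-submodule of L, is spanned by Phi(1). *)
Lemma corner_simple_dim1 : basic_alg A -> simple_mod L -> d = 1%N.
Proof.
move=> basic [d0 minL].
have [V simV VC] := simple_submod_exists corner_hom_mx_submod (corner_hom_mx_neq0 d0).
have rankV := rank_simple_submod simV basic.
pose Phi := vec_mx (nz_row V).
have Phi0 : Phi != 0 by rewrite vec_mx_eq0 nz_row_eq0; case: simV => _ [].
have homPhi : corner_hom Phi.
  by apply/corner_hom_mxP; rewrite vec_mxK (submx_trans (nz_row_sub V)).
have eig b : exists c : K, rmul_mx b *m Phi = c *: Phi.
  have [c Vc] := rank1_submod_eigen (proj1 simV) rankV (nz_row_sub V) b.
  by exists c; rewrite -vec_mx_coind_act /= Vc linearZ.
case: (minL _ (corner_hom_image_submod homPhi)) => [|/eqP].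
  by move/eqP; rewrite -mxrank_eq0 genmxE mxrank_eq0 (negbTE Phi0).
by rewrite genmxE => rankPhi; apply/eqP; rewrite eqn_leq -{1}rankPhi rmul_eigen_rank_le1.
Qed.

End Coinduction.

(** * Cyclic modules with the same annihilator *)

Section CyclicIsomorphism.
Variables (K : fieldType) (A : falgType K).

Lemma orbit_mx_transfer (M N : cmod (1 : A)) (m : 'rV[K]_(cdim M)) (n : 'rV[K]_(cdim N)) :
  (forall x, m *m cact M x = 0 -> n *m cact N x = 0) ->
  orbit_mx m *m (pinvmx (orbit_mx m) *m orbit_mx n) = orbit_mx n.
Proof.
move=> ann; apply: v2r_mulmxI => y; rewrite [LHS]mulmxA [LHS]mulmxA.
set t := v2r y *m orbit_mx m *m pinvmx (orbit_mx m).
have tm : (t - v2r y) *m orbit_mx m = 0 by rewrite mulmxBl mulmxKpV ?submxMl // subrr.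
have := ann (r2v (t - v2r y)); rewrite -!orbit_mxE r2vK => /(_ tm).
by move/eqP; rewrite mulmxBl subr_eq0 => /eqP.
Qed.

Lemma cyclic_mod_iso (M N : cmod (1 : A)) (m : 'rV[K]_(cdim M)) (n : 'rV[K]_(cdim N)) :
  (forall v, exists x, v = m *m cact M x) -> (forall v, exists x, v = n *m cact N x) ->
  (forall x, m *m cact M x = 0 <-> n *m cact N x = 0) -> mod_iso M N.
Proof.
move=> genm genn ann.
have EMN := orbit_mx_transfer (fun x => (ann x).1).
have ENM := orbit_mx_transfer (fun x => (ann x).2).
pose P := pinvmx (orbit_mx m) *m orbit_mx n; pose Q := pinvmx (orbit_mx n) *m orbit_mx m.
have PQ : P *m Q = 1%:M.
  apply: (row_full_inj (orbit_mx_full genm)).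
  by rewrite mulmx1 mulmxA EMN ENM.
have QP : Q *m P = 1%:M.
  apply: (row_full_inj (orbit_mx_full genn)).
  by rewrite mulmx1 mulmxA ENM EMN.
exists P; split.
- by apply/row_freeP; exists Q.
- by apply/row_fullP; exists Q.
- have transfer y : m *m cact M y *m P = n *m cact N y.
    by rewrite -!orbit_mxE -mulmxA EMN.
  move=> a; apply/row_matrixP => i; rewrite !rowE; have [x ->] := genm (delta_mx 0 i).
  rewrite [LHS]mulmxA [RHS]mulmxA -(mulmxA m) -cactM !transfer.
  by rewrite cactM mulmxA.
Qed.

End CyclicIsomorphism.

(** * The extension class of a module with top and socle L(f) *)

(* d is a derivation of eAe with values in the one-dimensional bimodule given by chi. *)
Definition char_der (K : fieldType) (A : falgType K) (e : A) (chi d : A -> K) :=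
  (forall k a b, d (k *: (e * a * e) + e * b * e) = k * d (e * a * e) + d (e * b * e)) /\
  (forall a b, d ((e * a * e) * (e * b * e)) =
                 d (e * b * e) * chi (e * a * e) + chi (e * b * e) * d (e * a * e)).

Lemma char_corner_char (K : fieldType) (A : falgType K) (e f : A) (mu : A -> K) :
  (forall k a b, mu (k *: a + b) = k * mu a + mu b) ->
  (forall a b, mu (a * b) = mu a * mu b) -> mu f = 1 -> corner_char e f mu.
Proof. by move=> muD muM mu_f; split=> // *; rewrite ?muD ?muM. Qed.

Section ExtensionClass.
Variables (K : fieldType) (A : falgType K) (e f : A) (M : cmod (1 : A)).
Hypotheses (ee : e * e = e) (fprim : primitive_idempotent f) (ef : e * f = f) (fe : f * e = f).
Hypothesis basic : basic_alg A.
Hypothesis nsimM : ~ simple_mod M.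
Variable chi : A -> K.
Hypothesis chi_char : corner_char e f chi.
Local Notation n := (cdim M).
Local Notation ca := (cact M).

(* (m, d) presents M: the annihilator of the generator m, hence M up to isomorphism,
   is read off from chi and d. *)
Definition ext_class (m : 'rV[K]_n) (d : A -> K) :=
  [/\ char_der e chi d, exists a, d (e * a * e) != 0,
      forall x, m *m ca x = 0 <-> (forall y, chi (e * y * x * f) = 0 -> d (e * y * x * f) = 0) &
      forall v, exists x, v = m *m ca x].

Section RadicalSocle.
Variables (R S : 'M[K]_n).
Hypotheses (radR : is_rad R) (socS : is_soc S).
Hypotheses (maxR : max_submod R) (fR : ~~ (cact M f <= R)%MS).
Hypotheses (simS : simple_submod S) (Sf : S *m cact M f != 0).
Hypothesis eRS : (R *m ca e <= S)%MS.

Let subR : submod R := proj1 maxR.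

Lemma top_gen_exists : exists i, ~~ (row i (ca f) <= R)%MS.
Proof. by case/row_subPn: fR => i; exists i. Qed.

Definition top_gen := row (xchoose top_gen_exists) (ca f).

Lemma top_gen_notR : ~~ (top_gen <= R)%MS.
Proof. exact: xchooseP top_gen_exists. Qed.

Lemma top_gen_f : top_gen *m ca f = top_gen.
Proof. by rewrite -row_mul -cactM (prim_idem fprim). Qed.

Lemma top_gen_e : top_gen *m ca e = top_gen.
Proof. by rewrite -top_gen_f -mulmxA -cactM ef. Qed.

Definition top_char :=
  line_char (fun a => max_submod_line maxR basic top_gen_notR (top_gen *m ca a)).

Lemma top_charE a : (top_gen *m ca a - top_char a *: top_gen <= R)%MS.
Proof. exact: line_charE. Qed.

Definition soc_gen := nz_row S.

Lemma soc_gen_neq0 : soc_gen != 0.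
Proof. by rewrite nz_row_eq0; case: simS => _ []. Qed.

Lemma soc_line : (S <= soc_gen)%MS.
Proof.
by apply: rank1_sub_rV soc_gen_neq0 (nz_row_sub S); apply: rank_simple_submod simS basic.
Qed.

Let submod0 : submod (0 : 'M[K]_n).
Proof. by move=> a; rewrite mul0mx. Qed.

Let soc_gen_not0 : ~~ (soc_gen <= (0 : 'M_n))%MS.
Proof. by rewrite submx0 soc_gen_neq0. Qed.

Let soc_gen_eigen a : exists c : K, (soc_gen *m ca a - c *: soc_gen <= (0 : 'M_n))%MS.
Proof.
have rankS := rank_simple_submod simS basic.
have [c ->] := rank1_submod_eigen (proj1 simS) rankS (nz_row_sub S) a.
by exists c; rewrite subrr sub0mx.
Qed.

Definition soc_char := line_char soc_gen_eigen.

Lemma soc_charE a : soc_gen *m ca a = soc_char a *: soc_gen.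
Proof. by apply/eqP; rewrite -subr_eq0 -submx0; apply: line_charE. Qed.

Lemma top_char_chi a : top_char (e * a * e) = chi (e * a * e).
Proof.
apply: (corner_char_unique ee fprim ef fe _ chi_char); apply: char_corner_char.
- exact: line_charD top_gen_notR _.
- exact: line_charM subR top_gen_notR _.
- by apply: line_char_unique top_gen_notR _ _ _ _; rewrite top_gen_f scale1r subrr sub0mx.
Qed.

Lemma soc_char_chi a : soc_char (e * a * e) = chi (e * a * e).
Proof.
have socM := line_charM submod0 soc_gen_not0 soc_gen_eigen.
apply: (corner_char_unique ee fprim ef fe _ chi_char); apply: char_corner_char => //.
  exact: line_charD soc_gen_not0 _.
have soc_f0 : soc_char f != 0.
  apply: contraNneq Sf => soc_f0; have /submxP[X ->] := soc_line.
  by rewrite -mulmxA soc_charE soc_f0 scale0r mulmx0.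
by apply: (mulfI soc_f0); rewrite mulr1 -socM (prim_idem fprim).
Qed.

Lemma simple_submod_soc V : simple_submod V -> (soc_gen <= V)%MS.
Proof.
move=> simV; have V0 : V != 0 by case: simV => _ [].
have Vs : (V <= soc_gen)%MS.
  apply: submx_trans soc_line; apply/row_subP => i; apply/socS.
  exists 1%N, (fun=> row i V); split; first by rewrite big_ord1.
  by move=> _; exists V; split=> //; apply: row_sub.
rewrite -(mxrank_leqif_sup Vs).2 eqn_leq mxrankS //= rank_rV soc_gen_neq0.
by rewrite lt0n mxrank_eq0.
Qed.

(* Otherwise rad M = 0, and M, being its own top, would be one-dimensional. *)
Lemma soc_sub_rad : (soc_gen <= R)%MS.
Proof.
apply: NNPP => sR; apply/nsimM/dim1_simple.
have [R0|R0] := eqVneq R 0; last first.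
  have [V simV VR] := simple_submod_exists subR R0.
  by case: sR; apply: submx_trans (simple_submod_soc simV) VR.
by have := rank_compl_max_submod maxR basic; rewrite mxrank_compl R0 mxrank0 subn0.
Qed.

Lemma top_soc_free c d : c *: top_gen + d *: soc_gen = 0 -> c = 0 /\ d = 0.
Proof.
move=> cd0; have c0 : c = 0.
  apply: contraNeq top_gen_notR => c0.
  rewrite -(scale1r top_gen) -(mulVf c0) -scalerA scalemx_sub //.
  have -> : c *: top_gen = - (d *: soc_gen) by apply/eqP; rewrite -subr_eq0 opprK cd0.
  by rewrite eqmx_opp scalemx_sub // soc_sub_rad.
split=> //; move/eqP: cd0; rewrite c0 scale0r add0r scaler_eq0 (negbTE soc_gen_neq0) orbF.
by move/eqP.
Qed.

Lemma top_soc_coef_eq c1 d1 c2 d2 :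
  c1 *: top_gen + d1 *: soc_gen = c2 *: top_gen + d2 *: soc_gen -> c1 = c2 /\ d1 = d2.
Proof.
move=> eq12; have := @top_soc_free (c1 - c2) (d1 - d2).
rewrite !scalerBl addrACA -opprD eq12 subrr => /(_ erefl) [/eqP c12 /eqP d12].
by split; apply/eqP; rewrite -subr_eq0.
Qed.

Lemma ext_coef_exists a : exists d : K,
  top_gen *m ca (e * a * e) - chi (e * a * e) *: top_gen == d *: soc_gen.
Proof.
set y := _ - _; have yR : (y <= R)%MS by rewrite /y -top_char_chi; apply: top_charE.
have ye : y *m ca e = y.
  by rewrite /y mulmxBl -scalemxAl top_gen_e -mulmxA -cactM !mulrA ee.
have /sub_rVP[d ->] : (y <= soc_gen)%MS.
  by rewrite -ye (submx_trans _ soc_line) // (submx_trans _ eRS) ?submxMr.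
by exists d.
Qed.

(* The class of M in Ext^1_eAe(L, L). *)
Definition ext_coef a := xchoose (ext_coef_exists a).

Lemma ext_coefE z : e * z * e = z ->
  top_gen *m ca z = chi z *: top_gen + ext_coef z *: soc_gen.
Proof.
move=> ez; have := xchooseP (ext_coef_exists z).
by rewrite -/(ext_coef z) subr_eq addrC ez => /eqP.
Qed.

Lemma ext_coef_der : char_der e chi ext_coef.
Proof.
split=> [k a b|a b].
  have := ext_coefE (corner_comb ee k a b).
  rewrite linearP mulmxDr -scalemxAr !ext_coefE ?(cornerK ee) //.
  by rewrite scalerDr !scalerA addrACA -!scalerDl => /esym /top_soc_coef_eq [_ ->].
have := ext_coefE (corner_prod ee a b).
rewrite cactM mulmxA ext_coefE ?(cornerK ee) // mulmxDl -!scalemxAl.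
rewrite ext_coefE ?(cornerK ee) //.
rewrite soc_charE soc_char_chi scalerDr !scalerA -addrA -scalerDl.
by move=> /esym /top_soc_coef_eq [_ ->]; rewrite addrC.
Qed.

Lemma soc_gen_e : soc_gen *m ca e = soc_gen.
Proof.
have e_corner : e * 1 * e = e by rewrite mulr1 ee.
have chi_e : chi e = 1.
  have eee : e * e * e = e by rewrite !ee.
  have := charM chi_char eee (corner_f ef fe); rewrite ef.
  by case: chi_char => _ _ ->; rewrite mulr1.
by rewrite soc_charE -{1}e_corner soc_char_chi e_corner chi_e scale1r.
Qed.

Lemma top_gen_generates v : exists x, v = top_gen *m ca x.
Proof.
apply/cyclic_submxP; apply: submx_full; apply: NNPP => /negP nfull.
have [U [subU [Unf maxU]] genU] := max_submod_exists (cyclic_submx_submod top_gen) nfull.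
have RU : (R <= U)%MS.
  apply/row_subP => i.
  exact: (radR (row i R)).1 (row_sub i R) _ (conj subU (conj Unf maxU)).
case/negP: Unf; rewrite -sub1mx; apply/row_subP => i.
have [c mc] := max_submod_line maxR basic top_gen_notR (row i 1%:M).
rewrite -(subrK (c *: top_gen) (row i 1%:M)) addmx_sub ?(submx_trans mc RU) //.
by rewrite scalemx_sub // (submx_trans (cyclic_submx_self _) genU).
Qed.

Lemma ext_coef_neq0 : exists a, ext_coef (e * a * e) != 0.
Proof.
apply: NNPP => nz; have all0 a : ext_coef (e * a * e) = 0.
  by apply/eqP; apply: NNPP => nz_a; apply: nz; exists a; apply/negP.
have [x sx] := top_gen_generates soc_gen.
have : soc_gen = top_gen *m ca (e * x * e).
  by rewrite -{1}soc_gen_e sx -{1}top_gen_e -!mulmxA -!cactM.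
rewrite ext_coefE ?(cornerK ee) // all0.
rewrite -[soc_gen in LHS]scale1r -[LHS]add0r -(scale0r top_gen).
by move/top_soc_coef_eq => [_ /eqP]; rewrite oner_eq0.
Qed.

Lemma top_gen_mul_fcorner y x :
  top_gen *m ca (e * y * x * f) = top_gen *m ca x *m ca y *m ca e.
Proof. by rewrite !cactM !mulmxA top_gen_f. Qed.

(* If top_gen . x != 0, the submodule it generates contains soc M; this yields y
   with top_gen . (e y x f) = soc_gen. *)
Lemma top_gen_ann x : top_gen *m ca x = 0 <->
  (forall y, chi (e * y * x * f) = 0 -> ext_coef (e * y * x * f) = 0).
Proof.
split=> [mx0 y _|ann].
  have := top_gen_mul_fcorner y x.
  by rewrite mx0 !mul0mx (ext_coefE (corner_eyxf ee y x fe)); case/top_soc_free.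
apply: NNPP => /eqP mx0.
have [V simV Vmx] := simple_submod_exists (cyclic_submx_submod _) (cyclic_submx_neq0 mx0).
have /cyclic_submxP[y sy] := submx_trans (simple_submod_soc simV) Vmx.
have : soc_gen = top_gen *m ca (e * y * x * f) by rewrite top_gen_mul_fcorner -sy soc_gen_e.
rewrite (ext_coefE (corner_eyxf ee y x fe)).
rewrite -[soc_gen in LHS]scale1r -[LHS]add0r -(scale0r top_gen).
move/top_soc_coef_eq => [/esym chi0 d1].
by have := ann y chi0; rewrite -d1 => /eqP; rewrite oner_eq0.
Qed.

Lemma extension_class_exists : exists m d, ext_class m d.
Proof.
exists top_gen, ext_coef; split.
- exact: ext_coef_der.
- exact: ext_coef_neq0.
- exact: top_gen_ann.
- exact: top_gen_generates.
Qed.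

End RadicalSocle.

Lemma lemma8_cond_extension_class : lemma8_cond e f M -> exists m d, ext_class m d.
Proof. by case=> R [S [radR socS [maxR fR] [simS Sf] eRS]]; apply: extension_class_exists. Qed.

End ExtensionClass.

(** * Ext^1 of a one-dimensional eAe-module *)

Lemma lin_indep2 (K : fieldType) (T : Type) (g1 g2 : T -> K) :
  (exists t, g1 t != 0) -> (exists t, g2 t != 0) ->
  (forall lam, lam != 0 -> ~ (forall t, g2 t = lam * g1 t)) ->
  forall c1 c2, (forall t, c1 * g1 t + c2 * g2 t = 0) -> c1 = 0 /\ c2 = 0.
Proof.
move=> [t1 g1t1] [t2 g2t2] nprop c1 c2 c12.
have [c20|c20] := eqVneq c2 0.
  split=> //; have /eqP := c12 t1; rewrite c20 mul0r addr0 mulf_eq0 (negbTE g1t1) orbF.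
  by move/eqP.
have [c10|c10] := eqVneq c1 0.
  by have /eqP := c12 t2; rewrite c10 mul0r add0r mulf_eq0 (negbTE c20) (negbTE g2t2).
case: (nprop (- (c1 / c2))); first by rewrite oppr_eq0 mulf_neq0 ?invr_eq0.
move=> t; apply: (mulfI c20); have /eqP := c12 t; rewrite addrC addr_eq0 => /eqP ->.
by rewrite mulNr mulrN mulrA mulrCA divff // mulr1.
Qed.

Lemma mx_dim1_scalar (K : fieldType) n (X : 'M[K]_n) : n = 1%N -> X = (\tr X)%:M.
Proof.
by move=> n1; move: X; rewrite n1 => X; rewrite {1}[X]mx11_scalar /mxtrace big_ord1.
Qed.

Lemma mxtrace_scalar_dim1 (K : fieldType) n (x : K) : n = 1%N -> \tr (x%:M : 'M[K]_n) = x.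
Proof. by move=> n1; rewrite mxtrace_scalar n1. Qed.

Section OneDimensionalCornerModule.
Variables (K : fieldType) (A : falgType K) (e f : A) (L : cmod e).
Hypothesis dimL : cdim L = 1%N.
Definition cact_tr a := \tr (cact L a).

Lemma cact_scalar a : cact L a = (cact_tr a)%:M.
Proof. exact: mx_dim1_scalar. Qed.

Lemma trace_corner_char : f * f = f -> e * f * e = f -> cact L f != 0 ->
  corner_char e f cact_tr.
Proof.
move=> ff corner_f Lf; split.
- by move=> k a b; rewrite /cact_tr (cact_lin L) mxtraceD mxtraceZ.
- move=> a b; rewrite {1}/cact_tr (cact_mul L) !cact_scalar.
  by rewrite -scalar_mxM mxtrace_scalar_dim1 // mulrC.
have chi_f0 : cact_tr f != 0.
  by apply: contraNneq Lf => chi0; rewrite cact_scalar chi0 raddf0.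
have := cact_mul L f f; rewrite corner_f ff cact_scalar -scalar_mxM.
move/(congr1 mxtrace); rewrite !mxtrace_scalar_dim1 // => /eqP.
by rewrite -{1}[cact_tr f]mulr1 eq_sym => /eqP /(mulfI chi_f0).
Qed.

(* Inner derivations of a one-dimensional module vanish, so Ext^1 is the space of
   chi-derivations. *)
Lemma ext1_dim_gt1_of_char_ders (d1 d2 : A -> K) :
  char_der e cact_tr d1 -> char_der e cact_tr d2 ->
  (forall c1 c2, (forall a, c1 * d1 (e * a * e) + c2 * d2 (e * a * e) = 0) ->
     c1 = 0 /\ c2 = 0) ->
  ext1_dim_gt1 L L.
Proof.
have der d : char_der e cact_tr d -> is_der (V := L) (W := L) (fun a => (d a)%:M).
  case=> dD dM; split=> [k a b|a b]; first by rewrite dD raddfD /= scale_scalar_mx.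
  by rewrite dM raddfD /= !cact_scalar -!scalar_mxM.
move=> der1 der2 indep; exists (fun a => (d1 a)%:M), (fun a => (d2 a)%:M).
split; [exact: der | exact: der |] => c1 c2 [X innerX]; apply: indep => a.
have := innerX a; rewrite cact_scalar scalar_mxC subrr !scale_scalar_mx -raddfD /=.
by move/(congr1 mxtrace); rewrite mxtrace_scalar_dim1 // mxtrace0.
Qed.

End OneDimensionalCornerModule.

Lemma corner_proportional_eq0 (K : fieldType) (A : falgType K) (e : A) (d1 d2 : A -> K) lam :
  lam != 0 -> (forall a, d2 (e * a * e) = lam * d1 (e * a * e)) ->
  forall z, e * z * e = z -> (d1 z = 0 <-> d2 z = 0).
Proof.
move=> lam0 d21 z ez; rewrite -ez d21; split=> [-> |/eqP]; first by rewrite mulr0.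
by rewrite mulf_eq0 (negbTE lam0) => /eqP.
Qed.

Theorem lemma8 (K : closedFieldType) (A : falgType K) (e f e' : A)
  (hbasic : basic_alg A)
  (he : is_idem e) (hf : primitive_idempotent f) (he' : is_idem e')
  (horth1 : f * e' = 0) (horth2 : e' * f = 0) (hdec : e = f + e')
  (M N : cmod (1 : A))
  (hMN : ~ mod_iso M N) (hMs : ~ simple_mod M) (hNs : ~ simple_mod N)
  (hM : lemma8_cond e f M) (hN : lemma8_cond e f N) :
  forall L : cmod e, simple_mod L -> cact L f != 0 -> ext1_dim_gt1 L L.
Proof.
move=> L simL Lf; have ff := prim_idem hf.
have ef : e * f = f by rewrite hdec mulrDl ff horth2 addr0.
have fe : f * e = f by rewrite hdec mulrDr ff horth1 addr0.
have dimL := corner_simple_dim1 he hbasic simL.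
have chiL := trace_corner_char dimL ff (corner_f ef fe) Lf.
have [m [dM [derM dM0 annM genM]]] := lemma8_cond_extension_class he hf ef fe hbasic hMs chiL hM.
have [n [dN [derN dN0 annN genN]]] := lemma8_cond_extension_class he hf ef fe hbasic hNs chiL hN.
apply: (ext1_dim_gt1_of_char_ders dimL derM derN).
apply: (lin_indep2 dM0 dN0) => lam lam0 dNM; apply/hMN/(cyclic_mod_iso genM genN) => x.
rewrite annM annN; have dMN y := corner_proportional_eq0 lam0 dNM (corner_eyxf he y x fe).
by split=> ann y /ann; rewrite dMN.
Qed.
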